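(* Let $R$ be as in the standing setup and let $I, J$ be nonzero ideals of $R$. Then $v(I+J)=v(I)\cup v(J)$ if and only if $v(I\cap J)=v(I)\cap v(J)$.
   Context: Standing setup: $k$ is a field and $R$ is a complete local domain with $k\subseteq R\subseteq k[[t]]$, residue field $k$, maximal ideal $m$, and nonzero conductor $(R:k[[t]])\neq 0$. Let $v$ denote the $t$-adic valuation on $k[[t]]$. For a nonzero ideal $I$ of $R$, $v(I)=\{v(a): a\in I, a\neq 0\}$. *)

From HB Require Import structures.
From mathcomp Require Import all_boot all_order all_algebra.
Set Implicit Arguments. Unset Strict Implicit. Unset Printing Implicit Defensive.
Import Order.TTheory GRing.Theory Num.Theory.
Local Open Scope ring_scope.

Section PS.
Variable k : fieldType.

(* k[[t]] : f n is the coefficient of t^n *)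
Definition ps := nat -> k.

Definition ps_const (c : k) : ps := fun n => if n == 0%N then c else 0.
Definition ps0 : ps := ps_const 0.
Definition ps1 : ps := ps_const 1.
Definition ps_add (f g : ps) : ps := fun n => f n + g n.
Definition ps_opp (f : ps) : ps := fun n => - f n.
Definition ps_sub (f g : ps) : ps := ps_add f (ps_opp g).
Definition ps_mul (f g : ps) : ps :=
  fun n => \sum_(i < n.+1) f i * g (n - i)%N.

(* t-adic valuation: ps_ord f n  <->  f <> 0 and v(f) = n *)
Definition ps_ord (f : ps) (n : nat) : Prop :=
  f n <> 0 /\ forall i, (i < n)%N -> f i = 0.

Definition pset := ps -> Prop.

Definition k_subring (R : pset) : Prop :=
  (forall c, R (ps_const c)) /\
  (forall f g, R f -> R g -> R (ps_add f g)) /\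
  (forall f, R f -> R (ps_opp f)) /\
  (forall f g, R f -> R g -> R (ps_mul f g)).

Definition unitR (R : pset) (f : ps) : Prop :=
  R f /\ exists g, R g /\ ps_mul f g = ps1.
Definition maxR (R : pset) : pset := fun f => R f /\ ~ unitR R f.

(* R local: the non-units form an ideal (closure under multiplication
   by R is automatic in a commutative ring) *)
Definition is_local (R : pset) : Prop :=
  forall f g, maxR R f -> maxR R g -> maxR R (ps_add f g).

(* residue field k: k -> R/m is surjective *)
Definition residue_field_k (R : pset) : Prop :=
  forall f, R f -> exists c, maxR R (ps_sub f (ps_const c)).

Inductive mpow (R : pset) : nat -> ps -> Prop :=
| mpow_base f : R f -> mpow R 0 f
| mpow_zero e : mpow R e ps0
| mpow_add e f g : mpow R e f -> mpow R e g -> mpow R e (ps_add f g)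
| mpow_mul e a b : maxR R a -> mpow R e b -> mpow R e.+1 (ps_mul a b).

Definition madic_complete (R : pset) : Prop :=
  forall a : nat -> ps, (forall n, R (a n)) ->
    (forall e, exists N, forall n m, (N <= n)%N -> (N <= m)%N ->
        mpow R e (ps_sub (a n) (a m))) ->
    exists L, R L /\
      (forall e, exists N, forall n, (N <= n)%N -> mpow R e (ps_sub (a n) L)).

(* nonzero conductor (R : k[[t]]) *)
Definition conductor_nonzero (R : pset) : Prop :=
  exists c, c <> ps0 /\ forall y, R (ps_mul c y).

Definition standing_setup (R : pset) : Prop :=
  [/\ k_subring R, is_local R, residue_field_k R, madic_complete R
    & conductor_nonzero R].

Definition is_ideal (R I : pset) : Prop :=
  [/\ forall f, I f -> R f, I ps0,
      forall f g, I f -> I g -> I (ps_add f g)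
    & forall r f, R r -> I f -> I (ps_mul r f)].

Definition nonzero_set (I : pset) : Prop := exists f, I f /\ f <> ps0.

Definition ideal_sum (I J : pset) : pset :=
  fun f => exists a b, I a /\ J b /\ f = ps_add a b.
Definition ideal_cap (I J : pset) : pset := fun f => I f /\ J f.

Definition vset (I : pset) : nat -> Prop :=
  fun n => exists a, I a /\ a <> ps0 /\ ps_ord a n.

End PS.

(* Both directions cancel leading coefficients.  If v(I) ∩ v(J) ⊆ v(I ∩ J),
   write an element of I + J of order n as a + b with a ∈ I, b ∈ J; below n
   the coefficients of a and b cancel, and whenever they are nonzero at some
   m < n an element of I ∩ J of order m removes them from both, until a or b
   has order exactly n.  Conversely, take a ∈ I and b ∈ J of order n with the
   same leading coefficient.  The difference a - b lies in I + J, so its order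
   is attained in I or in J, and correcting a or b by such an element raises
   the order of a - b.  Since the conductor is nonzero, J contains every series
   of order at least some M; once the order of a - b reaches M we get
   a - b ∈ J, hence a ∈ I ∩ J. *)

From mathcomp Require Import all_boot all_order all_algebra zify.
From Stdlib Require Import FunctionalExtensionality Classical.
Set Implicit Arguments. Unset Strict Implicit. Unset Printing Implicit Defensive.
Import Order.TTheory GRing.Theory Num.Theory.
Local Open Scope ring_scope.

Section PowerSeries.
Variable k : fieldType.
Implicit Types (f g h y : ps k) (c : k).

Lemma ps_ext f g : (forall i, f i = g i) -> f = g.
Proof. exact: functional_extensionality. Qed.

Definition ps_scale c f : ps k := fun i => c * f i.

Lemma ps_mul_constl c f : ps_mul (ps_const c) f = ps_scale c f.
Proof.
apply: ps_ext => i; rewrite /ps_mul big_ord_recl subn0 big1 ?addr0 // => j _.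
by rewrite /ps_const mul0r.
Qed.

(* The coefficient of t^i in a product only involves coefficients up to t^i,
   so the ring laws of [ps_mul] are inherited from truncated polynomials. *)
Definition ps_trunc (N : nat) f : {poly k} := \poly_(i < N) f i.

Lemma coef_mul_trunc N f g i :
  (i < N)%N -> (ps_trunc N f * ps_trunc N g)`_i = ps_mul f g i.
Proof.
move=> iN; rewrite coefM; apply: eq_bigr => j _; rewrite !coef_poly.
by rewrite (leq_ltn_trans _ iN) ?(leq_ltn_trans (leq_subr _ _) iN) // -ltnS.
Qed.

Lemma coefM_prefix (P Q P' Q' : {poly k}) i :
  (forall j, (j <= i)%N -> P`_j = P'`_j) ->
  (forall j, (j <= i)%N -> Q`_j = Q'`_j) ->
  (P * Q)`_i = (P' * Q')`_i.
Proof.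
move=> PP' QQ'; rewrite !coefM; apply: eq_bigr => j _.
by rewrite PP' ?QQ' ?leq_subr // -ltnS.
Qed.

Lemma ps_mulC f g : ps_mul f g = ps_mul g f.
Proof.
apply: ps_ext => i.
by rewrite -(coef_mul_trunc f g (ltnSn i)) -(coef_mul_trunc g f (ltnSn i)) mulrC.
Qed.

Lemma ps_mulA f g h : ps_mul (ps_mul f g) h = ps_mul f (ps_mul g h).
Proof.
apply: ps_ext => i.
rewrite -(coef_mul_trunc _ h (ltnSn i)) -(coef_mul_trunc f _ (ltnSn i)).
have trunc_mul f1 g1 j : (j <= i)%N ->
    (ps_trunc i.+1 f1 * ps_trunc i.+1 g1)`_j = (ps_trunc i.+1 (ps_mul f1 g1))`_j.
  by move=> ji; rewrite coef_poly ltnS ji coef_mul_trunc.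
rewrite -(coefM_prefix (trunc_mul f g) (fun _ _ => erefl)).
by rewrite -(coefM_prefix (fun _ _ => erefl) (trunc_mul g h)) mulrA.
Qed.

Definition vanishes_below f (m : nat) := forall i, (i < m)%N -> f i = 0.

Lemma vanishes_belowS f m : vanishes_below f m -> f m = 0 -> vanishes_below f m.+1.
Proof. by move=> fm fm0 i; rewrite ltnS leq_eqVlt => /predU1P[->|/fm]. Qed.

Lemma vanishes_below_le f m n : (n <= m)%N -> vanishes_below f m -> vanishes_below f n.
Proof. by move=> nm fm i ni; apply: fm; apply: leq_trans nm. Qed.

Lemma ps_ord_mul f g s t : ps_ord f s -> ps_ord g t -> ps_ord (ps_mul f g) (s + t).
Proof.
move=> [fs0 fs] [gt0 gt].
have lower_term j i : (j <= i)%N -> (i < s + t)%N -> f j * g (i - j)%N = 0.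
  move=> ji it; case: (ltnP j s) => [/fs -> | sj]; first by rewrite mul0r.
  by rewrite gt ?mulr0 //; lia.
split=> [|i it]; last first.
  by rewrite /ps_mul big1 // => j _; apply: lower_term it; rewrite -ltnS.
have ss : (s < (s + t).+1)%N by rewrite ltnS leq_addr.
rewrite /ps_mul (bigD1 (Ordinal ss)) //= addKn big1 ?addr0.
  by apply/eqP; rewrite mulf_neq0 //; apply/eqP.
move=> j; rewrite -val_eqE /= => /eqP js.
case: (ltnP j s) => [/fs -> | sj]; first by rewrite mul0r.
have jt := ltn_ord j; rewrite gt ?mulr0 //; lia.
Qed.

Lemma ps_ord_exists f : f <> ps0 k -> exists n, ps_ord f n.
Proof.
move=> f_nz; have f_supp : exists i, f i != 0.
  apply: NNPP => f0; apply: f_nz; apply: ps_ext => i.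
  rewrite /ps0 /ps_const if_same; apply/eqP/negPn/negP => fi.
  by apply: f0; exists i.
exists (ex_minn f_supp); case: ex_minnP => m /eqP fm m_min; split=> // i im.
by apply/eqP/negPn/negP => /m_min; rewrite leqNgt im.
Qed.

Section Quotient.
Variables (g f : ps k) (s : nat).
Hypotheses (g_ord : ps_ord g s) (f_vanishes : vanishes_below f s).

(* The j-th coefficient of f / g is solved for from the coefficient of
   t^(j + s) in g * (f / g) = f. *)
Fixpoint quot_coefs n : seq k :=
  if n is n'.+1 then
    let q := quot_coefs n' in
    rcons q ((f (n' + s)%N - \sum_(j < n') q`_j * g (n' + s - j)%N) / g s)
  else [::].

Definition ps_quot : ps k := fun j => (quot_coefs j.+1)`_j.

Lemma size_quot_coefs n : size (quot_coefs n) = n.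
Proof. by elim: n => //= n IH; rewrite size_rcons IH. Qed.

Lemma nth_quot_coefs n j : (j < n)%N -> (quot_coefs n)`_j = ps_quot j.
Proof.
elim: n => // n IH; rewrite ltnS leq_eqVlt => /predU1P[-> // | jn].
by rewrite /= nth_rcons size_quot_coefs jn IH.
Qed.

Lemma ps_quot_rec n :
  ps_quot n * g s + \sum_(j < n) ps_quot j * g (n + s - j)%N = f (n + s)%N.
Proof.
rewrite {1}/ps_quot /= nth_rcons size_quot_coefs ltnn eqxx.
under eq_bigr => j _ do rewrite (nth_quot_coefs (ltn_ord j)).
by rewrite mulfVK ?subrK //; apply/eqP; case: g_ord.
Qed.

Lemma ps_mul_quot : ps_mul g ps_quot = f.
Proof.
case: g_ord => _ g_vanishes; apply: ps_ext => i; rewrite ps_mulC /ps_mul.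
case: (ltnP i s) => [i_lt_s | si].
  by rewrite f_vanishes // big1 // => j _; rewrite g_vanishes ?mulr0 //; lia.
rewrite -(subnK si) -ps_quot_rec; set n := (i - s)%N.
pose F j := ps_quot j * g (n + s - j)%N.
rewrite -(big_mkord xpredT F) (big_cat_nat _ (n := n.+1)) //= ?ltnS ?leq_addr //.
rewrite big_nat_recr //= /F addKn big_mkord addrC.
rewrite [X in X + _]big1_seq ?add0r 1?addrC //.
move=> j /andP[_]; rewrite mem_index_iota => /andP[nj jns].
by rewrite g_vanishes ?mulr0 //; lia.
Qed.

End Quotient.

Lemma ps_dvd g f s : ps_ord g s -> vanishes_below f s -> exists y, ps_mul g y = f.
Proof. by move=> g_ord f_vanishes; exists (ps_quot g f s); apply: ps_mul_quot. Qed.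

Lemma vanishes_below_cancel f g m : vanishes_below f m -> ps_ord g m ->
  vanishes_below (ps_add f (ps_scale (- (f m / g m)) g)) m.+1.
Proof.
move=> f_van [gm g_van]; apply: vanishes_belowS => [i im|].
  by rewrite /ps_add /ps_scale (f_van i im) (g_van i im) mulr0 addr0.
by rewrite /ps_add /ps_scale mulNr divfK ?subrr //; apply/eqP.
Qed.

Lemma ps_ord_add_vanishes f g n m : (n < m)%N ->
  ps_ord f n -> vanishes_below g m -> ps_ord (ps_add f g) n.
Proof.
move=> nm [fn f_van] g_van; split=> [|i ni]; rewrite /ps_add g_van ?addr0 //.
  exact: f_van.
exact: ltn_trans nm.
Qed.

Lemma vanishes_below_scale c f m :
  vanishes_below f m -> vanishes_below (ps_scale c f) m.
Proof. by move=> f_van i im; rewrite /ps_scale f_van ?mulr0. Qed.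

Definition ps_subspace (V : pset k) : Prop :=
  [/\ V (ps0 k), forall f g, V f -> V g -> V (ps_add f g)
    & forall c f, V f -> V (ps_scale c f)].

Lemma ideal_subspace R I : k_subring R -> is_ideal R I -> ps_subspace I.
Proof.
move=> [R_const _] [_ I0 I_add I_mul]; split=> // c f If.
by rewrite -ps_mul_constl; apply: I_mul.
Qed.

Lemma vset_ord (V : pset k) f n : V f -> ps_ord f n -> vset V n.
Proof.
move=> Vf [fn f_van]; exists f; do 2!split=> //.
by move=> f0; apply: fn; rewrite f0 /ps0 /ps_const if_same.
Qed.

Lemma vset_capP (I J : pset k) n : vset (ideal_cap I J) n -> vset I n /\ vset J n.
Proof. by case=> f [[If Jf] fn]; split; exists f. Qed.

Lemma vset_sum_union (I J : pset k) n : ps_subspace I -> ps_subspace J ->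
  vset I n \/ vset J n -> vset (ideal_sum I J) n.
Proof.
have ps0E i : ps0 k i = 0 by rewrite /ps0 /ps_const if_same.
move=> [I0 _ _] [J0 _ _] [] [f [Vf fn]]; exists f; split=> //.
- exists f, (ps0 k); do 2!split=> //.
  by apply: ps_ext => i; rewrite /ps_add ps0E addr0.
- exists (ps0 k), f; do 2!split=> //.
  by apply: ps_ext => i; rewrite /ps_add ps0E add0r.
Qed.

Section SumAndIntersection.
Variables I J : pset k.
Hypotheses (I_sub : ps_subspace I) (J_sub : ps_subspace J).

Lemma vset_sum_of_cap :
  (forall n, vset I n -> vset J n -> vset (ideal_cap I J) n) ->
  forall n, vset (ideal_sum I J) n -> vset I n \/ vset J n.
Proof.
move: I_sub J_sub => [_ I_add I_scale] [_ J_add J_scale] cap_vset n.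
case=> f [[a [b [Ia [Jb fE]]]] [_ [fn f_van]]].
have split_vanishing m : (m <= n)%N -> exists a' b', [/\ I a', J b',
    f = ps_add a' b', vanishes_below a' m & vanishes_below b' m].
  elim: m => [_|m IH mn]; first by exists a, b.
  have [{}a [{}b [{}Ia {}Jb {}fE a_van b_van]]] := IH (ltnW mn).
  have ab_m : a m + b m = 0 by have := f_van m mn; rewrite fE.
  have [am0 | am_nz] := eqVneq (a m) 0.
    have bm0 : b m = 0 by rewrite am0 add0r in ab_m.
    by exists a, b; split=> //; apply: vanishes_belowS.
  have [c [[Ic Jc] [_ cm]]] : vset (ideal_cap I J) m.
    have bm_nz : b m <> 0.
      by move=> bm0; move: am_nz; rewrite -ab_m bm0 addr0 eqxx.
    apply: cap_vset; [apply: (vset_ord Ia) | apply: (vset_ord Jb)].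
      by split=> //; apply/eqP.
    by split.
  exists (ps_add a (ps_scale (- (a m / c m)) c)).
  exists (ps_add b (ps_scale (- (b m / c m)) c)).
  split; try exact: vanishes_below_cancel.
  - by apply: I_add => //; apply: I_scale.
  - by apply: J_add => //; apply: J_scale.
  - rewrite fE; apply: ps_ext => i; rewrite /ps_add /ps_scale addrACA -mulrDl.
    by rewrite -opprD -mulrDl ab_m mul0r oppr0 mul0r addr0.
have [a' [b' [Ia' Jb' fE' a_van b_van]]] := split_vanishing n (leqnn n).
have [an0 | an_nz] := eqVneq (a' n) 0.
  by right; apply: (vset_ord Jb'); split=> //; rewrite fE' /ps_add an0 add0r in fn.
by left; apply: (vset_ord Ia'); split=> //; apply/eqP.
Qed.

Variable M : nat.
Hypothesis J_tail : forall f, vanishes_below f M -> J f.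

Lemma vset_cap_of_sum :
  (forall n, vset (ideal_sum I J) n -> vset I n \/ vset J n) ->
  forall n, vset I n -> vset J n -> vset (ideal_cap I J) n.
Proof.
move: I_sub J_sub => [_ I_add I_scale] [_ J_add J_scale] sum_vset n.
move=> [a0 [Ia0 [_ a0_ord]]] [b0 [Jb0 [_ [b0n b0_van]]]].
have close_gap m : (n < m)%N -> exists a b,
    [/\ I a, J b, ps_ord a n & vanishes_below (ps_sub a b) m].
  elim: m => // m IH; rewrite ltnS leq_eqVlt => /predU1P[<- | nm].
    exists a0, (ps_scale (a0 n / b0 n) b0); split=> //; first exact: J_scale.
    apply: vanishes_belowS => [i ni|]; rewrite /ps_sub /ps_add /ps_opp /ps_scale.
      by rewrite (b0_van i ni) mulr0 subr0; case: a0_ord => _; apply.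
    by rewrite divfK ?subrr //; apply/eqP.
  have [a [b [Ia Jb a_ord e_van]]] := IH nm.
  set e := ps_sub a b in e_van.
  have [em0 | em_nz] := eqVneq (e m) 0.
    by exists a, b; split=> //; apply: vanishes_belowS.
  have : vset (ideal_sum I J) m.
    apply: (vset_ord (f := e)); last by split=> //; apply/eqP.
    exists a, (ps_scale (-1) b); do 2!split=> //; first exact: J_scale.
    by apply: ps_ext => i; rewrite /e /ps_sub /ps_add /ps_opp /ps_scale mulN1r.
  case/sum_vset => [[a1 [Ia1 [_ a1_ord]]] | [b1 [Jb1 [_ b1_ord]]]].
  - exists (ps_add a (ps_scale (- (e m / a1 m)) a1)), b; split=> //.
    + by apply: I_add => //; apply: I_scale.
    + apply: ps_ord_add_vanishes nm a_ord _.
      by apply: vanishes_below_scale; case: a1_ord.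
    + have := vanishes_below_cancel e_van a1_ord.
      suff -> : ps_sub (ps_add a (ps_scale (- (e m / a1 m)) a1)) b =
                ps_add e (ps_scale (- (e m / a1 m)) a1) by [].
      by apply: ps_ext => i; rewrite /e /ps_sub /ps_add addrAC.
  - exists a, (ps_add b (ps_scale (e m / b1 m) b1)); split=> //.
    + by apply: J_add => //; apply: J_scale.
    + have := vanishes_below_cancel e_van b1_ord.
      suff -> : ps_sub a (ps_add b (ps_scale (e m / b1 m) b1)) =
                ps_add e (ps_scale (- (e m / b1 m)) b1) by [].
      apply: ps_ext => i; rewrite /e /ps_sub /ps_add /ps_opp /ps_scale.
      by rewrite opprD mulNr addrA.
have [a [b [Ia Jb a_ord e_van]]] := close_gap (maxn M n.+1) (leq_maxr _ _).
apply: (vset_ord (f := a)) a_ord; split=> //.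
have -> : a = ps_add (ps_sub a b) b.
  by apply: ps_ext => i; rewrite /ps_sub /ps_add /ps_opp subrK.
apply: J_add => //; apply: J_tail; apply: vanishes_below_le e_van; exact: leq_maxl.
Qed.

End SumAndIntersection.

Lemma ideal_contains_tail R J :
  standing_setup R -> is_ideal R J -> nonzero_set J ->
  exists M, forall f, vanishes_below f M -> J f.
Proof.
case=> _ _ _ _ [c [c_nz cR]] [_ _ _ J_mul] [b [Jb b_nz]].
have [q c_ord] := ps_ord_exists c_nz.
have [p b_ord] := ps_ord_exists b_nz.
exists (q + p)%N => f f_van.
have [y <-] := ps_dvd (ps_ord_mul c_ord b_ord) f_van.
by rewrite ps_mulA [ps_mul b y]ps_mulC -ps_mulA; apply: J_mul.
Qed.

End PowerSeries.

Theorem lemma1p1 (k : fieldType) (R I J : pset k) :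
  standing_setup R ->
  is_ideal R I -> is_ideal R J -> nonzero_set I -> nonzero_set J ->
  ((forall n, vset (ideal_sum I J) n <-> (vset I n \/ vset J n)) <->
   (forall n, vset (ideal_cap I J) n <-> (vset I n /\ vset J n))).
Proof.
move=> R_setup I_ideal J_ideal _ J_nz.
have R_sub : k_subring R by case: R_setup.
have I_sub := ideal_subspace R_sub I_ideal.
have J_sub := ideal_subspace R_sub J_ideal.
have [M J_tail] := ideal_contains_tail R_setup J_ideal J_nz.
split=> [sum_vset | cap_vset] n; split.
- exact: vset_capP.
- by case; apply: (vset_cap_of_sum I_sub J_sub J_tail) => m /sum_vset.
- by apply: (vset_sum_of_cap I_sub J_sub) => m Im Jm; apply/cap_vset.
- exact: vset_sum_union.
Qed.
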